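(* Let $\mathbb{K}$ be a field and $f=a_0(x)+a_1(x)y+\cdots+a_n(x)y^n\in\mathbb{K}[x,y]$ with $n\geq 2$, $a_0,\ldots,a_n\in\mathbb{K}[x]$, $a_0a_n\neq 0$, such that $f$ has no nonconstant factor in $\mathbb{K}[x]$ and $\deg a_n>\max\{\deg a_0,\ldots,\deg a_{n-1}\}$. If $a_n$ is irreducible in $\mathbb{K}[x]$, or if $a_0$ is irreducible in $\mathbb{K}[x]$ and $\deg a_0\geq\deg a_n-\deg q$, where $q\in\mathbb{K}[x]$ is an irreducible factor of $a_n$ of smallest degree, then $f$ is irreducible over $\mathbb{K}[x]$.
   Context: $f$ is regarded as a polynomial in $y$ with coefficients in $\mathbb{K}[x]$; irreducibility over $\mathbb{K}[x]$ means irreducibility in $\mathbb{K}[x][y]$. *)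

From HB Require Import structures.
From mathcomp Require Import all_boot all_order all_algebra.
Set Implicit Arguments. Unset Strict Implicit. Unset Printing Implicit Defensive.
Import GRing.Theory.
Local Open Scope ring_scope.

(* Genuine divisibility in a commutative ring (mathcomp's %| on {poly R} for
   R a non-field is pseudo-division based, so we avoid it for K[x][y]). *)
Definition rdvd (R : comNzRingType) (a b : R) : Prop := exists c, b = a * c.

Definition irreducible_elt (R : idomainType) (f : R) : Prop :=
  f != 0 /\ ~~ (f \is a GRing.unit) /\
  forall g h : R, f = g * h -> (g \is a GRing.unit) \/ (h \is a GRing.unit).

From mathcomp Require Import all_boot all_order all_algebra.
From mathcomp Require Import zify.
From Stdlib Require Import Classical.
Set Implicit Arguments. Unset Strict Implicit. Unset Printing Implicit Defensive.
Import GRing.Theory.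
Local Open Scope ring_scope.

(* Regard f as a polynomial in x with coefficients in K[y]: the degree
   hypothesis says that its top x-coefficient is the monomial c y^n. Top
   x-coefficients multiply, so in a factorization f = g h each factor has a
   monomial top x-coefficient too, i.e. inherits the degree hypothesis. Hence a
   factor of positive y-degree has a nonconstant leading coefficient, of degree
   larger than that of its constant term. If g and h are nonunits, they have
   positive y-degree (f has no content). Then a_n = lc(g) lc(h) is reducible,
   and if a_0 = g_0 h_0 is irreducible, say with g_0 constant, an irreducible
   factor of lc(g) gives deg a_n = deg lc(g) + deg lc(h) > deg q + deg a_0. *)

Section LeadCoefDominant.

Variable R : nzRingType.
Implicit Types u : {poly {poly R}}.

Definition lead_coef_dominant u : Prop :=
  forall i, (i < (size u).-1)%N -> (size (u`_i)%R < size (lead_coef u))%N.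

Lemma coef_lead_coef_swapXY u j :
  (lead_coef (swapXY u))`_j = u`_j`_(sizeY u).-1.
Proof. by rewrite lead_coefE -sizeYE coef_swapXY. Qed.

Lemma size_lead_coef_swapXY u : (size (lead_coef (swapXY u)) <= size u)%N.
Proof.
apply/leq_sizeP => j /(nth_default 0) u_j0.
by rewrite coef_lead_coef_swapXY u_j0 coef0.
Qed.

Lemma lead_coef_dominantP u :
  lead_coef_dominant u <->
  exists c, lead_coef (swapXY u) = c *: 'X^((size u).-1).
Proof.
split=> [dom_u | [c lead_swap_u] i lt_i_n].
  have sizeY_u : sizeY u = size (lead_coef u).
    apply/eqP; rewrite eqn_leq max_size_lead_coefXY andbT.
    apply/bigmax_leqP => [[i /= lt_i_u]] _.
    have [/dom_u/ltnW // | le_n_i] := ltnP i (size u).-1.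
    have -> : i = (size u).-1.
      by apply/eqP; rewrite eqn_leq le_n_i andbT -ltnS (ltn_predK lt_i_u).
    by rewrite lead_coefE.
  exists (lead_coef (lead_coef u)); apply/polyP => j.
  rewrite coef_lead_coef_swapXY coefZ coefXn sizeY_u.
  case: (ltngtP j (size u).-1) => [lt_j_n | lt_n_j | ->]; rewrite ?mulr0 ?mulr1.
  - have lt_uj_lead := dom_u j lt_j_n.
    by apply: nth_default; rewrite -ltnS (ltn_predK lt_uj_lead).
  - by rewrite (nth_default 0 (_ : size u <= j)%N) ?coef0 //; lia.
  - by rewrite lead_coefE.
have [u0 | nz_u] := eqVneq u 0; first by rewrite u0 size_poly0 in lt_i_n.
have nz_sizeY : (0 < sizeY u)%N by rewrite lt0n sizeY_eq0.
have lead_lead_u : (lead_coef u)`_(sizeY u).-1 = c.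
  rewrite lead_coefE -coef_lead_coef_swapXY lead_swap_u.
  by rewrite coefZ coefXn eqxx mulr1.
have nz_c : c != 0.
  apply: contraNneq nz_u => c0.
  by rewrite -swapXY_eq0 -lead_coef_eq0 lead_swap_u c0 scale0r.
have size_lead_u : size (lead_coef u) = sizeY u.
  apply/eqP; rewrite eqn_leq max_size_lead_coefXY /=.
  rewrite -(prednK nz_sizeY) ltnNge; apply: contra nz_c => le_lead_u.
  by rewrite -lead_lead_u nth_default.
have u_i_top : u`_i`_(sizeY u).-1 = 0.
  by rewrite -coef_lead_coef_swapXY lead_swap_u coefZ coefXn ltn_eqF ?mulr0.
rewrite size_lead_u ltn_neqAle max_size_coefXY andbT.
apply/eqP => size_u_i; move: u_i_top; rewrite -size_u_i -lead_coefE => /eqP.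
by rewrite lead_coef_eq0 -size_poly_eq0 size_u_i sizeY_eq0 (negbTE nz_u).
Qed.

Lemma size_lead_coef_dominant_gt1 u :
  lead_coef_dominant u -> (1 < size u)%N -> u`_0 != 0 ->
  (1 < size (lead_coef u))%N.
Proof.
move=> dom_u size_u nz_u0; apply: leq_ltn_trans (dom_u 0%N _); last by lia.
by rewrite size_poly_gt0.
Qed.

End LeadCoefDominant.

Lemma dvdp_Xn_monomial (K : fieldType) (p : {poly K}) n :
  p %| 'X^n -> p = lead_coef p *: 'X^((size p).-1).
Proof.
rewrite -[X in X ^+ n]subr0 -polyC0 => /dvdp_exp_XsubCP[k _].
rewrite polyC0 subr0 => /eqpP[[a b] /= /andP[nz_a nz_b] a_p].
have -> : p = (b / a) *: 'X^k.
  by rewrite mulrC -scalerA -a_p scalerA mulVf ?scale1r.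
rewrite lead_coefZ lead_coefXn mulr1 size_scale ?size_polyXn //.
by rewrite mulf_neq0 ?invr_eq0.
Qed.

Lemma lead_coef_dominantMl (K : fieldType) (g h : {poly {poly K}}) :
  h != 0 -> lead_coef_dominant (g * h) -> lead_coef_dominant g.
Proof.
move=> nz_h /lead_coef_dominantP[c]; rewrite rmorphM lead_coefM.
have [-> _ | nz_g] := eqVneq g 0; first by move=> i; rewrite size_poly0.
set Lg := lead_coef (swapXY g); set Lh := lead_coef (swapXY h) => LgLh.
have nz_Lg : Lg != 0 by rewrite lead_coef_eq0 swapXY_eq0.
have nz_Lh : Lh != 0 by rewrite lead_coef_eq0 swapXY_eq0.
have nz_c : c != 0.
  by apply: contraNneq (mulf_neq0 nz_Lg nz_Lh) => c0; rewrite LgLh c0 scale0r.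
have /dvdp_Xn_monomial Lg_monomial : Lg %| 'X^((size (g * h)).-1).
  by rewrite -(dvdpZr _ _ nz_c) -LgLh dvdp_mulIl.
apply/lead_coef_dominantP; exists (lead_coef Lg); rewrite [LHS]Lg_monomial.
suff -> : size Lg = size g by [].
have := size_mul nz_Lg nz_Lh; have := size_mul nz_g nz_h.
have := size_lead_coef_swapXY g; have := size_lead_coef_swapXY h.
have : (0 < size g)%N by rewrite size_poly_gt0.
rewrite LgLh size_scale // size_polyXn.
set a := size Lg; set b := size Lh; set G := size g; set H := size h.
set P := size (g * h); lia.
Qed.

Lemma lead_coef_dominantMr (K : fieldType) (g h : {poly {poly K}}) :
  g != 0 -> lead_coef_dominant (g * h) -> lead_coef_dominant h.
Proof. by rewrite mulrC; apply: lead_coef_dominantMl. Qed.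

Lemma irredp_mul_size1 (R : idomainType) (a b : {poly R}) :
  irreducible_poly (a * b) -> (size a == 1%N) || (size b == 1%N).
Proof.
move=> irr_ab; have := irredp_neq0 irr_ab; rewrite mulf_eq0 negb_or.
case/andP=> nz_a nz_b; apply/norP => -[/irr_ab/(_ (dvdp_mulIl a b)) ab_a nb1].
move: (eqp_size ab_a) nb1; rewrite size_mul //.
have : (0 < size a)%N by rewrite size_poly_gt0.
have : (0 < size b)%N by rewrite size_poly_gt0.
set A := size a; set B := size b; lia.
Qed.

Lemma exists_irredp_dvdp (K : fieldType) (p : {poly K}) :
  (1 < size p)%N -> exists2 r, irreducible_poly r & r %| p.
Proof.
have [n] := ubnP (size p); elim: n p => // n IHn p /ltnSE le_p_n gt1_p.
have [irr_p | red_p] := classic (irreducible_poly p); first by exists p.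
have [q [size_q q_p not_q_p]] :
    exists q : {poly K}, [/\ size q != 1%N, q %| p & ~~ (q %= p)].
  apply: NNPP => no_q; apply: red_p; split=> // q size_q q_p.
  by apply/negPn/negP => not_q_p; apply: no_q; exists q.
have nz_p : p != 0 by rewrite -size_poly_gt0 ltnW.
have nz_q : q != 0 by apply: contraNneq nz_p => q0; rewrite -dvd0p -q0.
have lt_q_p : (size q < size p)%N.
  by rewrite ltn_neqAle dvdp_size_eqp // not_q_p dvdp_leq.
have [|r irr_r r_q] := IHn q (leq_trans lt_q_p le_p_n).
  by move: size_q nz_q; rewrite -size_poly_eq0; case: (size q) => [|[|]].
by exists r; last exact: dvdp_trans q_p.
Qed.

Lemma nonunit_factor_size_gt1 (K : fieldType) (f u : {poly {poly K}}) :
  (forall d : {poly K}, rdvd d%:P f -> (size d <= 1)%N) ->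
  rdvd u f -> u != 0 -> u \isn't a GRing.unit -> (1 < size u)%N.
Proof.
move=> no_content [v def_f] nz_u; apply: contraNT; rewrite -leqNgt.
move=> /size1_polyC def_u; have nz_u0 : u`_0 != 0.
  by apply: contraNneq nz_u => u00; rewrite def_u u00.
have size_u0 : size u`_0 = 1%N.
  have : (size (u`_0)%R <= 1)%N by apply: no_content; exists v; rewrite -def_u.
  by rewrite leq_eqVlt ltnS size_poly_leq0 (negbTE nz_u0) orbF => /eqP.
rewrite def_u poly_unitE size_polyC nz_u0 coefC /= poly_unitE size_u0 /=.
by rewrite unitfE; move: nz_u0; rewrite -lead_coef_eq0 lead_coefE size_u0.
Qed.

Lemma lead_coef_dominant_degree_gap (K : fieldType) (u v : {poly {poly K}})
    (q : {poly K}) :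
  lead_coef_dominant u -> lead_coef_dominant v ->
  (1 < size u)%N -> (1 < size v)%N -> size u`_0 = 1%N -> v`_0 != 0 ->
  (forall r, irreducible_poly r -> r %| lead_coef (u * v) ->
     (size q <= size r)%N) ->
  ((size ((u * v)`_0)%R).-1 + (size q).-1 < (size (lead_coef (u * v))).-1)%N.
Proof.
move=> dom_u dom_v size_u size_v size_u0 nz_v0 min_q.
have nz_u0 : u`_0 != 0 by rewrite -size_poly_gt0 size_u0.
have nz_lead_u : lead_coef u != 0 by rewrite lead_coef_eq0 -size_poly_gt0 ltnW.
have nz_lead_v : lead_coef v != 0 by rewrite lead_coef_eq0 -size_poly_gt0 ltnW.
have [r irr_r r_lead_u] :=
  exists_irredp_dvdp (size_lead_coef_dominant_gt1 dom_u size_u nz_u0).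
have le_q_r : (size q <= size r)%N.
  by apply: min_q; rewrite // lead_coefM dvdp_mulr.
have le_r_lead_u := dvdp_leq nz_lead_u r_lead_u.
have lt_v0_lead_v : (size (v`_0)%R < size (lead_coef v))%N.
  by apply: dom_v; rewrite -subn1 subn_gt0.
have : (0 < size (v`_0)%R)%N by rewrite size_poly_gt0.
have : (0 < size (lead_coef u))%N by rewrite size_poly_gt0.
move: le_q_r le_r_lead_u lt_v0_lead_v.
rewrite coef0M lead_coefM !size_mul // size_u0.
set A := size (lead_coef u); set B := size (lead_coef v).
set V0 := size (v`_0)%R; lia.
Qed.

Theorem corollary4 (K : fieldType) (f : {poly {poly K}}) :
  (3 <= size f)%N ->
  f`_0 * lead_coef f != 0 ->
  (forall d : {poly K}, rdvd (d%:P) f -> (size d <= 1)%N) ->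
  (forall i : nat, (i < (size f).-1)%N -> (size (f`_i)%R < size (lead_coef f))%N) ->
  (irreducible_poly (lead_coef f) \/
   (irreducible_poly f`_0 /\
    exists q : {poly K},
      [/\ irreducible_poly q, q %| lead_coef f,
          (forall r : {poly K}, irreducible_poly r -> r %| lead_coef f ->
             (size q <= size r)%N)
        & ((size (lead_coef f)).-1 <= (size (f`_0)%R).-1 + (size q).-1)%N])) ->
  irreducible_elt f.
Proof.
move=> size_f; rewrite mulf_eq0 negb_or => /andP[nz_a0 nz_an].
move=> no_content dom_f hyp.
have nz_f : f != 0 by rewrite -lead_coef_eq0.
split=> //; split=> [|g h def_f].
  rewrite poly_unitE negb_and; apply/orP; left.
  by apply: contraTneq size_f => ->.
have [|nunit_g] := boolP (g \is a GRing.unit); [by left | right].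
apply/negPn/negP => nunit_h.
move: (nz_f) (nz_a0); rewrite def_f coef0M !mulf_eq0 !negb_or.
move=> /andP[nz_g nz_h] /andP[nz_g0 nz_h0].
have size_g : (1 < size g)%N.
  by apply: nonunit_factor_size_gt1 no_content _ nz_g nunit_g; exists h.
have size_h : (1 < size h)%N.
  apply: nonunit_factor_size_gt1 no_content _ nz_h nunit_h.
  by exists g; rewrite mulrC.
have dom_g : lead_coef_dominant g.
  by apply: (lead_coef_dominantMl nz_h); rewrite -def_f; exact: dom_f.
have dom_h : lead_coef_dominant h.
  by apply: (lead_coef_dominantMr nz_g); rewrite -def_f; exact: dom_f.
case: hyp => [irr_an | [irr_a0 [q [_ _ min_q bound_q]]]].
  move: irr_an; rewrite def_f lead_coefM => /irredp_mul_size1 /orP[] /eqP size1.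
  - by have := size_lead_coef_dominant_gt1 dom_g size_g nz_g0; rewrite size1.
  - by have := size_lead_coef_dominant_gt1 dom_h size_h nz_h0; rewrite size1.
rewrite def_f in min_q bound_q; rewrite def_f coef0M in irr_a0.
move: bound_q; rewrite leqNgt => /negP; apply.
case/orP: (irredp_mul_size1 irr_a0) => /eqP size1.
- exact: lead_coef_dominant_degree_gap.
- rewrite mulrC in min_q *; exact: lead_coef_dominant_degree_gap.
Qed.
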